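(* Let $A,B$ be nonempty persistence diagrams, $d_0=\min\{d_\infty(A,B),d_\infty(D_0,B)\}$, $\Theta(c)=d_\infty(cA,B)$, and let $b^{(m)}=(b^{(m)}_x,b^{(m)}_y)$ be a point of $\chi(B)$ with the largest $y$-coordinate among points of $\chi(B)$. Then: (i) if $0\le c\le \dfrac{b^{(m)}_y-d_0}{\mathrm{bd}(A)}$, then $\Theta(c)\ge d_0$; (ii) if $0\le c\le \min\Big\{\dfrac{b^{(m)}_y+b^{(m)}_x}{2\,\mathrm{bd}(A)},\ \dfrac{\mathrm{pers}(B)}{\mathrm{pers}(A)}\Big\}$, then $\Theta(c)=\mathrm{pers}(B)$.
   Context: A persistence diagram is a finite multiset of points $a=(a_x,a_y)$ with $0\le a_x<a_y<\infty$ together with the diagonal $\Delta$ of infinite multiplicity; nonempty means it has at least one such point. $D_0$ is the empty diagram. $d_\infty$ is the bottleneck distance (infimum over multi-bijections between $A\cup\Delta$ and $B\cup\Delta$ of the maximal $\ell^\infty$ distance; matching $a$ to $\Delta$ costs $\mathrm{pers}(a)$). $cA=\{(ca_x,ca_y)\}$ for $c>0$, $0A=D_0$. $\mathrm{pers}(a)=(a_y-a_x)/2$; $\mathrm{pers}(A)=\max_{a\in A}\mathrm{pers}(a)$; $\chi(A)$ is the multiset of points of $A$ with persistence equal to $\mathrm{pers}(A)$; $\mathrm{bd}(A)=\max_{a\in A}a_y$. *)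

From HB Require Import structures.
From mathcomp Require Import all_boot all_order all_algebra.
From mathcomp Require Import reals.
Set Implicit Arguments. Unset Strict Implicit. Unset Printing Implicit Defensive.
Import Order.TTheory GRing.Theory Num.Theory.
Local Open Scope ring_scope.

Section PD.
Variable R : realType.

(* A point of the plane; a persistence diagram is a finite multiset of
   off-diagonal points, represented as a list (multiplicities = repetitions). *)
Definition pt := (R * R)%type.

Definition is_diagram (A : seq pt) : bool :=
  all (fun a => (0 <= a.1) && (a.1 < a.2)) A.

Definition linf (a b : pt) : R := Num.max `|a.1 - b.1| `|a.2 - b.2|.

(* persistence of a point: its l^infty distance to the diagonal *)
Definition pers (a : pt) : R := (a.2 - a.1) / 2.

Definition persD (A : seq pt) : R := \big[Num.max/0]_(a <- A) pers a.

Definition bd (A : seq pt) : R := \big[Num.max/0]_(a <- A) a.2.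

Definition scaleD (c : R) (A : seq pt) : seq pt :=
  if c == 0 then [::] else [seq (c * a.1, c * a.2) | a <- A].

Definition D0 : seq pt := [::].

(* A multi-bijection between A ∪ Δ and B ∪ Δ is (up to diagonal-to-diagonal
   pairs, which cost 0, and matching to the nearest diagonal point, which
   realises the infimum pers(a)) a partial injective matching between the
   off-diagonal points of A and B. *)
Definition matching (A B : seq pt) := {ffun 'I_(size A) -> option 'I_(size B)}.

Definition valid_matching A B (f : matching A B) : bool :=
  [forall i, forall j, ((f i != None) && (f i == f j)) ==> (i == j)].

Definition matching_cost A B (f : matching A B) : R :=
  Num.max
    (\big[Num.max/0]_(i : 'I_(size A))
        match f i with
        | Some j => linf (nth (0, 0) A i) (nth (0, 0) B j)
        | None => pers (nth (0, 0) A i)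
        end)
    (\big[Num.max/0]_(j : 'I_(size B) | [forall i, f i != Some j])
        pers (nth (0, 0) B j)).

Definition empty_matching A B : matching A B := [ffun => None].

(* bottleneck distance: minimum (= infimum, finitely many matchings) of the
   cost over all partial matchings *)
Definition bottleneck (A B : seq pt) : R :=
  \big[Num.min/matching_cost (empty_matching A B)]_(f : matching A B | valid_matching f)
     matching_cost f.

End PD.

From HB Require Import structures.
From mathcomp Require Import all_boot all_order all_algebra.
From mathcomp Require Import reals.
From mathcomp.algebra_tactics Require Import lra.
Import Order.TTheory GRing.Theory Num.Theory.
Local Open Scope ring_scope.

(* Matching every point of both diagrams to the diagonal shows
   d(X, Y) <= max(pers X, pers Y); this gives Theta(c) <= pers B in (ii) and
   d0 <= d(D0, B) <= pers B in (i).  For the lower bounds, follow the point bm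
   of B in any matching with cA: either it is left unmatched, at cost pers bm,
   or it is matched to some a of cA, at cost at least bm_y - a_y >=
   bm_y - c bd(A).  Hence Theta(c) >= min(pers B, bm_y - c bd(A)), and both
   parts follow from the bounds on c. *)

Section Diagrams.
Context {R : realType}.
Implicit Types (A B : seq (pt R)) (a b : pt R) (c : R).

Lemma persD_ge0 A : 0 <= persD A.
Proof. exact: bigmax_ge_id. Qed.

Lemma pers_le_persD {A a} : a \in A -> pers a <= persD A.
Proof. by move=> aA; apply: le_bigmax_seq. Qed.

Lemma snd_le_bd {A a} : a \in A -> a.2 <= bd A.
Proof. by move=> aA; apply: le_bigmax_seq. Qed.

Lemma bd_gt0 A : is_diagram A -> A != [::] -> 0 < bd A.
Proof.
move=> /allP dA; case: A dA => // a A dA _.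
have /andP[a1_ge0 a1_lt_a2] := dA a (mem_head a A).
by apply: lt_le_trans (snd_le_bd (mem_head a A)); apply: le_lt_trans a1_lt_a2.
Qed.

Lemma persD_gt0 A : is_diagram A -> A != [::] -> 0 < persD A.
Proof.
move=> /allP dA; case: A dA => // a A dA _.
have /andP[_ a1_lt_a2] := dA a (mem_head a A).
apply: lt_le_trans (pers_le_persD (mem_head a A)).
by rewrite /pers divr_gt0 // subr_gt0.
Qed.

Lemma scale_bigmax0 A c (F : pt R -> R) : 0 <= c ->
  \big[Num.max/0]_(a <- A) (c * F a) = c * \big[Num.max/0]_(a <- A) F a.
Proof.
move=> c_ge0; apply/esym/(big_morph (fun x => c * x)); last exact: mulr0.
by move=> x y; apply: maxr_pMr.
Qed.

Lemma bd_scaleD A c : 0 <= c -> bd (scaleD c A) = c * bd A.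
Proof.
move=> c_ge0; rewrite /scaleD /bd.
case: eqP => [->|_]; first by rewrite mul0r big_nil.
by rewrite big_map -scale_bigmax0.
Qed.

Lemma persD_scaleD A c : 0 <= c -> persD (scaleD c A) = c * persD A.
Proof.
move=> c_ge0; rewrite /scaleD /persD.
case: eqP => [->|_]; first by rewrite mul0r big_nil.
rewrite big_map -scale_bigmax0 //.
by apply: eq_bigr => a _; rewrite /pers /= -mulrBr mulrA.
Qed.

Lemma bottleneck_le_persD A B :
  bottleneck A B <= Num.max (persD A) (persD B).
Proof.
apply: le_trans (bigmin_le_id _ _ _ _) _.
rewrite /matching_cost; apply: le_max2; apply: bigmax_le (persD_ge0 _) _.
- by move=> i _; rewrite ffunE; apply/pers_le_persD/mem_nth.
- by move=> j _; apply/pers_le_persD/mem_nth.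
Qed.

Lemma snd_gap_le_linf a b : b.2 - a.2 <= linf a b.
Proof. by rewrite /linf le_max; apply/orP; right; rewrite distrC ler_norm. Qed.

Section Matching.
Variables (A B : seq (pt R)) (f : matching A B).

Lemma matched_linf_le_cost {i : 'I_(size A)} {j : 'I_(size B)} :
  f i = Some j -> linf (nth (0, 0) A i) (nth (0, 0) B j) <= matching_cost f.
Proof.
move=> fij; rewrite le_max; apply/orP; left.
by apply: bigmax_sup_seq (mem_index_enum i) _ _; rewrite // fij.
Qed.

Lemma unmatched_pers_le_cost {j : 'I_(size B)} :
  (forall i, f i != Some j) -> pers (nth (0, 0) B j) <= matching_cost f.
Proof.
move=> unmatched_j; rewrite le_max; apply/orP; right.
by apply: le_bigmax_seq (mem_index_enum j) _; apply/forallP.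
Qed.

Lemma pers_bd_gap_le_cost b :
  b \in B -> Num.min (pers b) (b.2 - bd A) <= matching_cost f.
Proof.
move=> bB; have jB : (index b B < size B)%N by rewrite index_mem.
pose j := Ordinal jB; have Bj : nth (0, 0) B j = b by rewrite nth_index.
have [i /eqP fij | unmatched_j] := pickP (fun i => f i == Some j).
  apply: le_trans _ (matched_linf_le_cost fij).
  rewrite ge_min Bj; apply/orP; right.
  apply: le_trans _ (snd_gap_le_linf _ _).
  by rewrite lerD2l lerN2 snd_le_bd // mem_nth.
have j_unmatched i : f i != Some j by rewrite unmatched_j.
apply: le_trans _ (unmatched_pers_le_cost j_unmatched).
by rewrite Bj ge_min lexx.
Qed.

End Matching.

Lemma pers_bd_gap_le_bottleneck A B b :
  b \in B -> Num.min (pers b) (b.2 - bd A) <= bottleneck A B.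
Proof.
move=> bB; apply: le_bigmin => [|f _]; exact: pers_bd_gap_le_cost.
Qed.

End Diagrams.

Theorem mainTheorem6 (R : realType) (A B : seq (pt R)) (bm : pt R) :
  is_diagram A -> is_diagram B -> A != [::] -> B != [::] ->
  bm \in B -> pers bm = persD B ->
  (forall b, b \in B -> pers b = persD B -> b.2 <= bm.2) ->
  let d0 := Num.min (bottleneck A B) (bottleneck (D0 R) B) in
  let Theta := fun c : R => bottleneck (scaleD c A) B in
  (forall c : R, 0 <= c -> c <= (bm.2 - d0) / bd A -> d0 <= Theta c) /\
  (forall c : R, 0 <= c ->
     c <= Num.min ((bm.2 + bm.1) / (2 * bd A)) (persD B / persD A) ->
     Theta c = persD B).
Proof.
(* Neither the maximality of bm.2 within chi(B) nor the diagram property of B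
   is needed: any point of maximal persistence works. *)
move=> dA _ nA _ bmB pers_bm _ d0 Theta.
have bdA_gt0 : 0 < bd A by exact: bd_gt0.
have persA_gt0 : 0 < persD A by exact: persD_gt0.
have Theta_ge c : 0 <= c -> Num.min (persD B) (bm.2 - c * bd A) <= Theta c.
  move=> c_ge0; rewrite -pers_bm -bd_scaleD //.
  exact: pers_bd_gap_le_bottleneck.
split=> [c c_ge0 | c c_ge0].
  rewrite ler_pdivlMr // => c_le; apply: le_trans (Theta_ge c c_ge0).
  rewrite le_min; apply/andP; split; last by lra.
  rewrite ge_min; apply/orP; right; apply: le_trans (bottleneck_le_persD _ _) _.
  by rewrite /persD big_nil ge_max persD_ge0 lexx.
rewrite le_min !ler_pdivlMr ?mulr_gt0 // => /andP[c_le_y c_le_pers].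
apply/eqP; rewrite eq_le; apply/andP; split.
  apply: le_trans (bottleneck_le_persD _ _) _.
  by rewrite persD_scaleD // ge_max c_le_pers lexx.
apply: le_trans (Theta_ge c c_ge0); rewrite le_min lexx -pers_bm /pers.
by move: c_le_y; lra.
Qed.
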